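(* Let $X$ be a non-negative continuous random variable with density $f$ satisfying $f(t) \le Ce^{-\lambda t}$ for all $t\ge0$, for some $C,\lambda>0$. Let $m \in (\chi_{\min},\chi_{\max})$ and $\mu = \min(\Pr[X\le m],\Pr[X\ge m])$ (so $\mu>0$). Let $Y$ be an $m$-reasonable random variable with density $g$. Then $g(t) \le \frac{C}{\mu}e^{-\lambda t}$ for all $t$, $\mathbb{E}[Y] \le \frac{C}{\mu\lambda}\cdot\frac{1}{\lambda}$, $\mathbb{E}[Y^2] \le \frac{C}{\mu\lambda}\cdot\frac{2}{\lambda^2}$, and $\Pr[Y\ge t] \le \frac{C}{\lambda\mu}e^{-\lambda t}$ for all $t \ge 0$.
   Context: $\chi_{\min} = \inf\{x:\Pr[X\ge x]>0\}$, $\chi_{\max} = \sup\{x:\Pr[X\le x]>0\}$. $X_{\le x}$ ($X_{\ge x}$) denotes $X$ conditioned on $X \le x$ ($X\ge x$). For $m\in(\chi_{\min},\chi_{\max})$, a random variable $Y$ is $m$-reasonable if either $Y = X_{\ge x}$ for some $x \le m$, or $Y = X_{\le x}$ for some $x\ge m$. *)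

From HB Require Import structures.
From mathcomp Require Import all_boot all_order all_algebra.
From mathcomp Require Import all_classical all_reals all_analysis.
Set Implicit Arguments. Unset Strict Implicit. Unset Printing Implicit Defensive.
Import Order.TTheory GRing.Theory Num.Theory.
Local Open Scope classical_set_scope.
Local Open Scope ring_scope.

Section defs.
Context (R : realType) (d : measure_display) (T : measurableType d)
  (P : probability T R).

Definition Pr (X : T -> R) (A : set R) : R := fine (P (X @^-1` A)).

Definition is_density (X : T -> R) (f : R -> R) : Prop :=
  [/\ measurable_fun setT f, (forall t, 0 <= f t), (forall t, t < 0 -> f t = 0)
    & forall A : set R, measurable A ->
        P (X @^-1` A) = (\int[lebesgue_measure]_(t in A) (f t)%:E)%E].

Definition chi_min (X : T -> R) : \bar R :=
  ereal_inf [set x%:E | x in [set x : R | 0 < Pr X `]-oo, x]%classic]].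
Definition chi_max (X : T -> R) : \bar R :=
  ereal_sup [set x%:E | x in [set x : R | 0 < Pr X `[x, +oo[%classic]].

Definition cond_set (upper : bool) (x : R) : set R :=
  if upper then `[x, +oo[%classic else `]-oo, x]%classic.

Definition cond_density (X : T -> R) (f : R -> R) (upper : bool) (x : R)
  : R -> R :=
  fun t => if t \in cond_set upper x then f t / Pr X (cond_set upper x) else 0.
End defs.

(* Y (on probability space Q) is distributed as X conditioned on
   X in cond_set upper x, i.e. Y = X_{>= x} (upper) or Y = X_{<= x}. *)
Definition is_conditioned (R : realType) (d : measure_display) (T : measurableType d)
  (P : probability T R) (X : T -> R)
  (d' : measure_display) (T' : measurableType d') (Q : probability T' R)
  (Y : T' -> R) (upper : bool) (x : R) : Prop :=
  0 < Pr P X (cond_set upper x) /\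
  forall A : set R, measurable A ->
    Pr Q Y A = Pr P X (A `&` cond_set upper x) / Pr P X (cond_set upper x).

Definition m_reasonable_via (R : realType) (d : measure_display) (T : measurableType d)
  (P : probability T R) (X : T -> R) (m : R)
  (d' : measure_display) (T' : measurableType d') (Q : probability T' R)
  (Y : T' -> R) (upper : bool) (x : R) : Prop :=
  (if upper then x <= m else m <= x) /\ is_conditioned P X Q Y upper x.

Definition m_reasonable (R : realType) (d : measure_display) (T : measurableType d)
  (P : probability T R) (X : T -> R) (m : R)
  (d' : measure_display) (T' : measurableType d') (Q : probability T' R)
  (Y : T' -> R) : Prop :=
  exists upper x, m_reasonable_via P X m Q Y upper x.

(* Conditioning on an event [S] multiplies densities and probabilities by
   [1 / Pr[X in S]], and [S] contains [`]-oo, m]] or [`[m, +oo[], so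
   [Pr[X in S] >= mu > 0].  This gives the density bound, and, after integrating
   the density bound of [X], the tail bound [Pr[Y >= t] <= C e^(-lam t) / (lam mu)].
   The moments follow from the tail bound through [E Z = int_0^oo Pr[Z > r] dr]
   for [Z >= 0], applied to [Y^+] and to [Y^2] (as [Y >= 0] almost surely,
   [Pr[Y^2 > r] <= Pr[Y >= sqrt r]]), with [int_0^oo e^(-lam r) dr = 1 / lam]
   and [int_0^oo e^(-lam sqrt r) dr = 2 / lam^2]. *)

From HB Require Import structures.
From mathcomp Require Import all_boot all_order all_algebra.
From mathcomp Require Import all_classical all_reals all_analysis.
From mathcomp Require Import ring lra.
Set Implicit Arguments.
Unset Strict Implicit.
Unset Printing Implicit Defensive.
Import Order.TTheory GRing.Theory Num.Theory.
Import numFieldNormedType.Exports.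
Import measurable_realfun.
Local Open Scope classical_set_scope.
Local Open Scope ring_scope.

Section exponential_integrals.
Context (R : realType) (lam : R).
Hypothesis lam_gt0 : 0 < lam.

Let lam_neq0 : lam != 0. Proof. by rewrite gt_eqF. Qed.

Lemma is_derive_scale_expRN (k x : R) :
  is_derive x 1 (fun y => k * expR (- (lam * y))) (- (k * lam) * expR (- (lam * x))).
Proof. by apply: is_derive_eq; rewrite /GRing.scale/= mulr1; ring. Qed.

Lemma continuous_scale_expRN (k : R) : continuous (fun y => k * expR (- (lam * y))).
Proof.
move=> y; apply: differentiable_continuous; apply/derivable1_diffP.
by case: (is_derive_scale_expRN k y).
Qed.

Lemma cvgy_scale_expRN (k : R) : k * expR (- (lam * y)) @[y --> +oo] --> 0.
Proof.
rewrite -(mulr0 k); apply: cvgMl_tmp.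
apply: (@cvg_comp _ _ _ (fun z => lam * z) (fun z => expR (- z)) _ (pinfty_nbhs R)).
  exact: gt0_cvgMry.
exact: cvgr_expR.
Qed.

Lemma continuous_scale_expRN_sqrt (k : R) :
  continuous (fun y => k * expR (- (lam * Num.sqrt y))).
Proof.
move=> y; apply: (@continuous_comp _ _ _ Num.sqrt (fun y => k * expR (- (lam * y)))).
  exact: sqrt_continuous.
exact: continuous_scale_expRN.
Qed.

Lemma cvgy_mul_expRN : y * expR (- (lam * y)) @[y --> +oo] --> 0.
Proof.
apply/cvgrPdist_le => e e0; near=> s.
have s_gt0 : 0 < s by near: s; exact: nbhs_pinfty_gt.
have s_ge : 2 / (e * lam ^+ 2) <= s by near: s; apply: nbhs_pinfty_ge; exact: num_real.
rewrite sub0r normrN ger0_norm ?mulr_ge0 ?expR_ge0 ?ltW//.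
rewrite expRN ltr_pdivrMr ?expR_gt0//.
(* [expR u >= 1 + u + u^2/2], so [expR (lam * s)] outgrows [s / e] quadratically. *)
have exp_ge := @expR_ge1Dxn R (lam * s) 1 (ltW (mulr_gt0 lam_gt0 s_gt0)).
apply: (lt_le_trans _ (ler_wpM2l (ltW e0) exp_ge)).
have : 2 <= e * lam ^+ 2 * s by rewrite -ler_pdivrMl ?mulr_gt0 ?exprn_gt0.
have -> : (2`!)%:R = 2 :> R by [].
nra.
Unshelve. all: end_near. Qed.

Lemma integral_scale_expRN (c a : R) : 0 <= c ->
  (\int[lebesgue_measure]_(x in `[a, +oo[) (c * expR (- (lam * x)))%:E =
   (c * expR (- (lam * a)) / lam)%:E)%E.
Proof.
move=> c_ge0.
rewrite (@ge0_continuous_FTC2y _ _ (fun y => - (c / lam) * expR (- (lam * y))) a 0).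
- by rewrite sub0e -EFinN mulNr opprK mulrAC.
- by move=> x _; rewrite mulr_ge0 ?expR_ge0.
- by move=> x; apply: continuous_subspaceT; exact: continuous_scale_expRN.
- exact: cvgy_scale_expRN.
- by move=> x _; case: (is_derive_scale_expRN (- (c / lam)) x).
- by apply: cvg_at_right_filter; exact: continuous_scale_expRN.
- move=> x _; rewrite derive1E (@derive_val _ _ _ _ _ _ _ (is_derive_scale_expRN _ x)).
  by congr (_ * _); field.
Qed.

(* Chosen so that [expR_sqrt_primitive k \o Num.sqrt] is a primitive of
   [fun x => k * expR (- (lam * Num.sqrt x))]. *)
Definition expR_sqrt_primitive (k y : R) :=
  - (2 * k) / lam * (y * expR (- (lam * y))) - 2 * k / lam ^+ 2 * expR (- (lam * y)).

Lemma is_derive_expR_sqrt_primitive (k s : R) :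
  is_derive s 1 (expR_sqrt_primitive k) (2 * k * s * expR (- (lam * s))).
Proof.
rewrite /expR_sqrt_primitive; apply: is_derive_eq.
by rewrite /GRing.scale/= !mulr1; field.
Qed.

Lemma cvgy_sqrt : (Num.sqrt r : R) @[r --> +oo] --> +oo.
Proof.
apply/cvgryPge => A; near=> r.
have r_ge : A ^+ 2 <= r by near: r; apply: nbhs_pinfty_ge; exact: num_real.
by rewrite (le_trans (ler_norm A)) // -sqrtr_sqr ler_wsqrtr.
Unshelve. all: end_near. Qed.

Lemma integral_scale_expRN_sqrt (k : R) : 0 <= k ->
  (\int[lebesgue_measure]_(x in `[0%R, +oo[) (k * expR (- (lam * Num.sqrt x)))%:E =
   (2 * k / lam ^+ 2)%:E)%E.
Proof.
move=> k_ge0; set H := expR_sqrt_primitive k.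
have H'x (x : R) : 0 < x ->
    is_derive x 1 (H \o Num.sqrt) (2 * k * Num.sqrt x * expR (- (lam * Num.sqrt x))
                                   * (2 * Num.sqrt x)^-1).
  move=> x_gt0.
  exact: is_derive1_comp (is_derive_expR_sqrt_primitive k _) (is_derive1_sqrt x_gt0).
have cont_H : continuous H.
  move=> y; apply: differentiable_continuous; apply/derivable1_diffP.
  by case: (is_derive_expR_sqrt_primitive k y).
rewrite (@ge0_continuous_FTC2y _ _ (H \o Num.sqrt) 0 0).
- rewrite sub0e -EFinN /= /H /expR_sqrt_primitive sqrtr0 !mulr0 oppr0 expR0.
  by rewrite mul0r mulr0 sub0r opprK mulr1.
- by move=> x _; rewrite mulr_ge0 ?expR_ge0.
- by move=> x; apply: continuous_subspaceT; exact: continuous_scale_expRN_sqrt.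
- apply: (cvg_comp _ _ cvgy_sqrt); rewrite -[0](subr0 0); apply: cvgB.
    by rewrite -(mulr0 (- (2 * k) / lam)); apply: cvgMl_tmp; exact: cvgy_mul_expRN.
  exact: cvgy_scale_expRN.
- by move=> x x_gt0; case: (H'x x x_gt0).
- apply: cvg_at_right_filter => /=.
  by apply: continuous_comp; [exact: sqrt_continuous | exact: cont_H].
- move=> x; rewrite in_itv/= andbT => x_gt0.
  rewrite derive1E (@derive_val _ _ _ _ _ _ _ (H'x x x_gt0)).
  have sqrt_neq0 : Num.sqrt x != 0 by rewrite gt_eqF ?sqrtr_gt0.
  by field.
Qed.

End exponential_integrals.

Section probability_tails.
Context (R : realType) (d : measure_display) (T : measurableType d)
  (P : probability T R).

Lemma PrE (X : {RV P >-> R}) (A : set R) : measurable A ->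
  P (X @^-1` A) = (Pr P X A)%:E.
Proof.
by move=> mA; rewrite /Pr fineK // fin_num_measure //; exact: measurable_funPTI.
Qed.

Lemma Pr_ge0 (X : T -> R) (A : set R) : 0 <= Pr P X A.
Proof. by rewrite /Pr fine_ge0. Qed.

Lemma le_Pr (X : {RV P >-> R}) (A B : set R) : measurable A -> measurable B ->
  A `<=` B -> Pr P X A <= Pr P X B.
Proof.
move=> mA mB AB; rewrite -lee_fin -!PrE //.
by apply: le_measure; rewrite ?inE; [exact: measurable_funPTI..| move=> w /AB].
Qed.

Lemma Pr_itvNy0_eq0 (X : T -> R) : (forall w, 0 <= X w) -> Pr P X `]-oo, 0[ = 0.
Proof.
move=> X_ge0; rewrite /Pr (_ : X @^-1` _ = set0) ?measure0 //.
by apply/seteqP; split => // w /=; rewrite in_itv/= ltNge X_ge0.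
Qed.

Lemma expectation_le_funrpos (Y : T -> R) : ('E_P[Y] <= 'E_P[Y^\+])%E.
Proof.
rewrite !unlock integralE.
apply: (@le_trans _ _ (\int[P]_w ((EFin \o Y)^\+ w) - 0)%E).
  by apply: leeB => //; apply: integral_ge0 => w _; exact: funeneg_ge0.
by rewrite sube0 funerpos.
Qed.

Lemma ge0_expectation_le_integral (Z : {RV P >-> R}) (h : R -> R) :
  (forall w, 0 <= Z w) -> continuous h ->
  (forall r, 0 <= r -> (ccdf Z r <= (h r)%:E)%E) ->
  ('E_P[Z] <= \int[lebesgue_measure]_(r in `[0%R, +oo[) (h r)%:E)%E.
Proof.
move=> Z_ge0 cont_h Z_le; rewrite ge0_expectation_ccdf //.
apply: ge0_le_integral => //.
- by apply: measurable_funTS; exact: ccdf_measurable.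
- by apply/measurable_EFinP; apply: measurable_funTS; exact: continuous_measurable_fun.
- by move=> r; rewrite /= in_itv/= andbT; exact: Z_le.
Qed.

Variables (Y : {RV P >-> R}) (K lam : R).
Hypotheses (K_ge0 : 0 <= K) (lam_gt0 : 0 < lam).
Hypothesis Y_tail : forall t, 0 <= t -> Pr P Y `[t, +oo[ <= K * expR (- (lam * t)).

Let Y_tailE t : 0 <= t -> (P (Y @^-1` `[t, +oo[) <= (K * expR (- (lam * t)))%:E)%E.
Proof. by move=> t_ge0; rewrite PrE // lee_fin Y_tail. Qed.

Lemma expectation_le_of_tail : ('E_P[Y] <= (K / lam)%:E)%E.
Proof.
apply: (le_trans (expectation_le_funrpos Y)).
apply: (@le_trans _ _ (\int[lebesgue_measure]_(r in `[0%R, +oo[)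
                          (K * expR (- (lam * r)))%:E)%E); last first.
  by rewrite integral_scale_expRN // mulr0 oppr0 expR0 mulr1.
apply: (@ge0_expectation_le_integral (Y^\+)%R) => [w|y|r r_ge0].
- exact: funrpos_ge0.
- exact: continuous_scale_expRN.
- rewrite /ccdf /distribution /pushforward; apply: (le_trans _ (Y_tailE r_ge0)).
  apply: le_measure; rewrite ?inE.
  + exact: measurable_funPTI.
  + exact: measurable_funPTI.
  + move=> w /=; rewrite !in_itv/= !andbT /funrpos lt_max => /orP[/ltW //|].
    by rewrite ltNge r_ge0.
Qed.

Lemma expectation_sqr_le_of_tail : Pr P Y `]-oo, 0[ = 0 ->
  ('E_P[(fun w => Y w ^+ 2)%R] <= (2 * K / lam ^+ 2)%:E)%E.
Proof.
move=> Y_neg; have Y_negE : P (Y @^-1` `]-oo, 0[) = 0%E by rewrite PrE // Y_neg.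
rewrite -(integral_scale_expRN_sqrt lam_gt0 K_ge0).
apply: (@ge0_expectation_le_integral (Y ^+ 2)%R) => [w|y|r r_ge0].
- exact: sqr_ge0.
- exact: continuous_scale_expRN_sqrt.
- rewrite /ccdf /distribution /pushforward; apply: (le_trans _ (Y_tailE (sqrtr_ge0 r))).
  apply: (@le_trans _ _ (P (Y @^-1` `[Num.sqrt r, +oo[ `|` Y @^-1` `]-oo, 0%R[))%E).
    apply: le_measure; rewrite ?inE.
    + exact: measurable_funPTI.
    + by apply: measurableU; exact: measurable_funPTI.
    + move=> w /=; rewrite !in_itv/= andbT => r_lt.
      have [Y_lt0|Y_ge0] := ltP (Y w) 0; [by right | left; rewrite andbT].
      by rewrite -(ger0_norm Y_ge0) -sqrtr_sqr ler_wsqrtr // ltW.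
  apply: (le_trans (measureU2 _ _ _)); [exact: measurable_funPTI..|].
  by rewrite -[leRHS]adde0 leeD // -Y_negE.
Qed.

End probability_tails.

Section conditioning.
Context (R : realType) (d : measure_display) (T : measurableType d)
  (P : probability T R) (X : {RV P >-> R}).

Lemma measurable_cond_set (upper : bool) (x : R) : measurable (cond_set upper x).
Proof. by rewrite /cond_set; case: upper. Qed.

Lemma chi_min_lt_Pr_gt0 (m : R) : (chi_min P X < m%:E)%E -> 0 < Pr P X `]-oo, m].
Proof.
move=> chi_min_lt; have [_ [z /= Pz_gt0 <-] z_lt_m] := ereal_inf_lt chi_min_lt.
apply: (lt_le_trans Pz_gt0); apply: le_Pr => //.
by apply: subset_itvl; rewrite bnd_simp -lee_fin ltW.
Qed.

Lemma chi_max_gt_Pr_gt0 (m : R) : (m%:E < chi_max P X)%E -> 0 < Pr P X `[m, +oo[.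
Proof.
move=> chi_max_gt; have [_ [z /= Pz_gt0 <-] m_lt_z] := ereal_sup_gt chi_max_gt.
apply: (lt_le_trans Pz_gt0); apply: le_Pr => //.
by apply: subset_itvr; rewrite bnd_simp -lee_fin ltW.
Qed.

Lemma min_Pr_le_Pr_cond_set (m : R) (upper : bool) (x : R) :
  (if upper then x <= m else m <= x) ->
  Num.min (Pr P X `]-oo, m]) (Pr P X `[m, +oo[) <= Pr P X (cond_set upper x).
Proof.
case: upper => x_side; rewrite ge_min /cond_set.
- by apply/orP; right; apply: le_Pr => //; apply: subset_itvr; rewrite bnd_simp.
- by apply/orP; left; apply: le_Pr => //; apply: subset_itvl; rewrite bnd_simp.
Qed.

Lemma Pr_itvy_le_of_density (f : R -> R) (C lam t : R) :
  is_density P X f -> 0 <= C -> 0 < lam ->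
  (forall t, 0 <= t -> f t <= C * expR (- (lam * t))) -> 0 <= t ->
  Pr P X `[t, +oo[ <= C * expR (- (lam * t)) / lam.
Proof.
move=> [mf f_ge0 _ fX] C_ge0 lam_gt0 f_le t_ge0.
rewrite -lee_fin -PrE // fX // -integral_scale_expRN //.
apply: ge0_le_integral => //.
- by move=> y _; rewrite lee_fin f_ge0.
- by apply/measurable_EFinP; exact: measurable_funTS mf.
- apply/measurable_EFinP; apply: measurable_funTS.
  by apply: continuous_measurable_fun; exact: continuous_scale_expRN.
- move=> y; rewrite /= in_itv/= andbT => t_le_y.
  by rewrite lee_fin f_le // (le_trans t_ge0).
Qed.

Lemma cond_density_le (f : R -> R) (upper : bool) (x C lam c t : R) :
  0 < c -> c <= Pr P X (cond_set upper x) -> 0 <= C ->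
  (forall t, t < 0 -> f t = 0) ->
  (forall t, 0 <= t -> f t <= C * expR (- (lam * t))) ->
  cond_density P X f upper x t <= C / c * expR (- (lam * t)).
Proof.
move=> c_gt0 c_le C_ge0 f_neg f_le.
have bound_ge0 : 0 <= C / c * expR (- (lam * t)).
  by rewrite mulr_ge0 ?expR_ge0 // divr_ge0 // ltW.
rewrite /cond_density; case: ifP => // _.
have [t_lt0|t_ge0] := ltP t 0; first by rewrite f_neg ?mul0r.
rewrite ler_pdivrMr ?(lt_le_trans c_gt0) //.
apply: (le_trans (f_le _ t_ge0)).
have c_neq0 : c != 0 by rewrite gt_eqF.
have -> : C * expR (- (lam * t)) = C / c * expR (- (lam * t)) * c by field.
exact: ler_wpM2l.
Qed.

Lemma is_conditioned_Pr_le (d' : measure_display) (T' : measurableType d')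
    (Q : probability T' R) (Y : T' -> R) (upper : bool) (x c : R) (A : set R) :
  is_conditioned P X Q Y upper x -> measurable A ->
  0 < c -> c <= Pr P X (cond_set upper x) ->
  Pr Q Y A <= Pr P X A / c.
Proof.
move=> [_ Y_cond] mA c_gt0 c_le; rewrite Y_cond //.
apply: ler_pM; rewrite ?invr_ge0 ?Pr_ge0 //.
- by apply: le_Pr => //; exact: measurableI (measurable_cond_set _ _).
- by rewrite lef_pV2 ?posrE // (lt_le_trans c_gt0).
Qed.

Lemma is_conditioned_Pr_eq0 (d' : measure_display) (T' : measurableType d')
    (Q : probability T' R) (Y : T' -> R) (upper : bool) (x : R) (A : set R) :
  is_conditioned P X Q Y upper x -> measurable A -> Pr P X A = 0 -> Pr Q Y A = 0.
Proof.
move=> [_ Y_cond] mA XA0; rewrite Y_cond //.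
suff -> : Pr P X (A `&` cond_set upper x) = 0 by rewrite mul0r.
apply/eqP; rewrite eq_le Pr_ge0 andbT -XA0.
by apply: le_Pr => //; exact: measurableI (measurable_cond_set _ _).
Qed.

End conditioning.

Theorem lemma2 (R : realType) (d : measure_display) (T : measurableType d)
  (P : probability T R) (X : {RV P >-> R}) (f : R -> R) (C lam m : R)
  (d' : measure_display) (T' : measurableType d') (Q : probability T' R)
  (Y : {RV Q >-> R}) (upper : bool) (x : R) :
  (forall w, 0 <= X w) ->
  is_density P X f ->
  0 < C -> 0 < lam ->
  (forall t, 0 <= t -> f t <= C * expR (- (lam * t))) ->
  (chi_min P X < m%:E)%E -> (m%:E < chi_max P X)%E ->
  m_reasonable_via P X m Q Y upper x ->
  let mu := Num.min (Pr P X `]-oo, m]%classic) (Pr P X `[m, +oo[%classic) in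
  let g := cond_density P X f upper x in
  [/\ (forall t, g t <= C / mu * expR (- (lam * t))),
      ('E_Q[Y] <= (C / (mu * lam) * (1 / lam))%:E)%E,
      ('E_Q[(fun w => Y w ^+ 2)%R] <= (C / (mu * lam) * (2 / lam ^+ 2))%:E)%E
    & (forall t, 0 <= t -> Pr Q Y `[t, +oo[%classic <= C / (lam * mu) * expR (- (lam * t)))].
Proof.
move=> X_ge0 fX C_gt0 lam_gt0 f_le chi_min_lt chi_max_gt [x_side Y_cond] mu g.
have mu_gt0 : 0 < mu by rewrite lt_min chi_min_lt_Pr_gt0 // chi_max_gt_Pr_gt0.
have mu_le : mu <= Pr P X (cond_set upper x) := min_Pr_le_Pr_cond_set X x_side.
have [lam_neq0 mu_neq0] : lam != 0 /\ mu != 0 by rewrite !gt_eqF.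
have Y_tail t : 0 <= t -> Pr Q Y `[t, +oo[ <= C / (lam * mu) * expR (- (lam * t)).
  move=> t_ge0; apply: (le_trans (is_conditioned_Pr_le Y_cond _ mu_gt0 mu_le)) => //.
  have -> : C / (lam * mu) * expR (- (lam * t)) = C * expR (- (lam * t)) / lam / mu.
    by field; rewrite mu_neq0 lam_neq0.
  apply: ler_wpM2r; first by rewrite invr_ge0 ltW.
  exact: Pr_itvy_le_of_density fX (ltW C_gt0) lam_gt0 f_le t_ge0.
have tail_const_ge0 : 0 <= C / (lam * mu) by apply/ltW; rewrite divr_gt0 ?mulr_gt0.
split => [t||| //].
- case: fX => _ _ f_neg _.
  exact: cond_density_le mu_gt0 mu_le (ltW C_gt0) f_neg f_le.
- rewrite (_ : _ * (1 / lam) = C / (lam * mu) / lam); last first.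
    by field; rewrite mu_neq0 lam_neq0.
  exact: expectation_le_of_tail.
- rewrite (_ : _ * (2 / lam ^+ 2) = 2 * (C / (lam * mu)) / lam ^+ 2); last first.
    by field; rewrite mu_neq0 lam_neq0.
  apply: expectation_sqr_le_of_tail => //.
  by rewrite (is_conditioned_Pr_eq0 Y_cond) // Pr_itvNy0_eq0.
Qed.
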